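(* Let $t$ be a positive integer, let $v$ be a positive integer, let $a_1$ be an invertible element of $\mathbb{Z}_v$ and let $d$ be a divisor of $v$ such that $v\ge d\,t(2t+1)$. Let $W=\{0,a_1,2a_1,\dots,ta_1\}\subseteq\mathbb{Z}_v$ be the set of vertices of the walk $(0,a_1,2a_1,\dots,ta_1)$. Then either $W\cap\{1,2,\dots,dt\}=\emptyset$ or $W\cap\{-1,-2,\dots,-dt\}=\emptyset$ (as subsets of $\mathbb{Z}_v$). *)

From mathcomp Require Import all_boot all_algebra.
Set Implicit Arguments. Unset Strict Implicit. Unset Printing Implicit Defensive.
Import GRing.Theory.
Local Open Scope ring_scope.

Definition walk_set (v t : nat) (a1 : 'Z_v) : {set 'Z_v} :=
  [set a1 *+ k | k : 'I_t.+1].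

Definition pos_block (v m : nat) : {set 'Z_v} :=
  [set (j.+1)%:R | j : 'I_m].

Definition neg_block (v m : nat) : {set 'Z_v} :=
  [set - (j.+1)%:R | j : 'I_m].

(* If i a1 = x and j a1 = -y with i, j <= t and 0 < x, y <= m, then i > 0
   (as x != 0 in Z_v) and the positive integer x j + y i <= 2 m t vanishes in
   Z_v, which is impossible when 2 m t < v. *)

From mathcomp Require Import all_boot all_algebra.
From mathcomp Require Import zify.
Import GRing.Theory.
Local Open Scope ring_scope.

Lemma Zp_natr_neq0 (v n : nat) : (0 < n < v)%N -> (n%:R : 'Z_v) != 0.
Proof.
case/andP=> n_gt0 n_lt_v; have v_gt1 : (1 < v)%N by apply: leq_ltn_trans n_lt_v.
by rewrite -(inj_eq val_inj) /= val_Zp_nat // modn_small // -lt0n.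
Qed.

Lemma mulrn_cross_eq0 {V : zmodType} {a b c : V} {i j : nat} :
  a *+ i = b -> a *+ j = - c -> b *+ j + c *+ i = 0.
Proof.
move=> ai_b /eqP; rewrite -eqr_oppLR => /eqP <-.
by rewrite -ai_b mulNrn -!mulrnA mulnC subrr.
Qed.

Lemma walk_set_disjoint_pos_or_neg_block (v t m : nat) (a : 'Z_v) :
  (0 < t)%N -> (m * (2 * t + 1) <= v)%N ->
  walk_set t a :&: pos_block v m = set0 \/
  walk_set t a :&: neg_block v m = set0.
Proof.
move=> t_gt0 mt_le_v.
case: (set_0Vmem (walk_set t a :&: pos_block v m)) => [->|[z]]; first by left.
rewrite !inE => /andP[/imsetP[i _ ->] /imsetP[x _ ai_x]].
right; apply/setP=> z'; rewrite !inE; apply/negP.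
case/andP=> /imsetP[j _ ->] /imsetP[y _ aj_y].
have i_lt := ltn_ord i; have j_lt := ltn_ord j.
have x_lt := ltn_ord x; have y_lt := ltn_ord y.
have [i0 | i_gt0] := posnP i.
  move: ai_x; rewrite i0 mulr0n => /esym/eqP; apply/negP.
  by apply: Zp_natr_neq0; apply/andP; split=> //; nia.
have := mulrn_cross_eq0 ai_x aj_y.
rewrite -!mulrnA -natrD => /eqP; apply/negP; apply: Zp_natr_neq0.
by apply/andP; split; nia.
Qed.

Theorem lemma3p1 (t v d : nat) (a1 : 'Z_v)
  (ht : (0 < t)%N) (hv : (0 < v)%N) (ha1 : a1 \is a GRing.unit)
  (hd : (d %| v)%N) (hvd : (d * t * (2 * t + 1) <= v)%N) :
  walk_set t a1 :&: pos_block v (d * t) = set0 \/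
  walk_set t a1 :&: neg_block v (d * t) = set0.
Proof. exact: walk_set_disjoint_pos_or_neg_block. Qed.
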